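(* Let $\mathbf{K}$ be an abstract elementary class with $\mathrm{LS}(\mathbf{K})=\aleph_0$ such that $\mathbf{K}_{\aleph_0}$ has amalgamation and no maximal models, and $\mathbf{K}$ is Galois-stable in $\aleph_0$. Assume $\mathbf{K}$ is categorical in $\aleph_0$ and saturative in $\aleph_0$. Then for every increasing continuous chain $\langle M_i:i\le\omega\rangle$ in $\mathbf{K}_{\aleph_0}$ there is an increasing continuous chain $\langle N_i:i\le\omega\rangle$ in $\mathbf{K}_{\aleph_0}$ such that: (1) for every $i<\omega$, $M_i$ is limit over $N_i$; (2) for every $i<\omega$, $N_{i+1}$ is limit over $N_i$; (3) $N_\omega=M_\omega$.
   Context: For $M_0\le_{\mathbf{K}} M_1$ in $\mathbf{K}_\lambda$: $M_1$ is universal over $M_0$ if every $N\in\mathbf{K}_\lambda$ with $M_0\le N$ embeds into $M_1$ over $M_0$. $M_1$ is limit over $M_0$ if there are a limit ordinal $\delta<\lambda^+$ and an increasing continuous chain $\langle N_i:i\le\delta\rangle$ in $\mathbf{K}_\lambda$ with $N_0=M_0$, $N_\delta=M_1$, and $N_{i+1}$ universal over $N_i$ for all $i<\delta$. $\mathbf{K}$ is saturative in $\lambda$ if for all $M_0\le M_1\le M_2$ in $\mathbf{K}_\lambda$, if $M_1$ is limit over $M_0$ then $M_2$ is limit over $M_0$. *)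

From mathcomp Require Import all_boot.
From Stdlib Require Import Relations.
Set Implicit Arguments. Unset Strict Implicit. Unset Printing Implicit Defensive.

Record vocab := Vocab {
  fsym : Type; farity : fsym -> nat;
  rsym : Type; rarity : rsym -> nat }.

Record structure (L : vocab) := Structure {
  carrier :> Type;
  fint : forall f : fsym L, ('I_(farity f) -> carrier) -> carrier;
  rint : forall r : rsym L, ('I_(rarity r) -> carrier) -> Prop }.

Definition is_embedding (L : vocab) (M N : structure L) (h : M -> N) : Prop :=
  (forall x y, h x = h y -> x = y) /\
  (forall (f : fsym L) (a : 'I_(farity f) -> M),
      h (@fint L M f a) = @fint L N f (fun k => h (a k))) /\
  (forall (r : rsym L) (a : 'I_(rarity r) -> M),
      @rint L M r a <-> @rint L N r (fun k => h (a k))).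

Definition is_iso (L : vocab) (M N : structure L) (h : M -> N) : Prop :=
  is_embedding h /\ (forall y, exists x, h x = y).

(** A class of structures together with its K-embeddings:
    kemb h  means  "h is an isomorphism of M onto h[M] and h[M] <=_K N". *)
Record AECdata (L : vocab) := AECData {
  inK : structure L -> Prop;
  kemb : forall M N : structure L, (M -> N) -> Prop }.

Definition well_order (I : Type) (lt : I -> I -> Prop) : Prop :=
  (forall i, ~ lt i i) /\
  (forall i j k, lt i j -> lt j k -> lt i k) /\
  (forall i j, lt i j \/ i = j \/ lt j i) /\
  well_founded lt.

Definition leo (I : Type) (lt : I -> I -> Prop) (i j : I) : Prop :=
  lt i j \/ i = j.

Definition is_chain (L : vocab) (K : AECdata L) (I : Type) (lt : I -> I -> Prop)
    (N : I -> structure L) (e : forall i j, N i -> N j) : Prop :=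
  (forall i j, leo lt i j -> @kemb L K (N i) (N j) (e i j)) /\
  (forall i (x : N i), e i i x = x) /\
  (forall i j k (x : N i), leo lt i j -> leo lt j k -> e j k (e i j x) = e i k x).

Definition AEC_axioms (L : vocab) (K : AECdata L) : Prop :=
  (forall (M N : structure L) (h : M -> N),
      @kemb L K M N h -> inK K M /\ inK K N /\ is_embedding h) /\
  (forall (M N : structure L) (h : M -> N), inK K M -> is_iso h -> inK K N) /\
  (forall (M N : structure L) (h : M -> N), inK K M -> is_iso h -> @kemb L K M N h) /\
  (forall (M N P : structure L) (h : M -> N) (g : N -> P),
      @kemb L K M N h -> @kemb L K N P g -> @kemb L K M P (fun x => g (h x))) /\
  (forall (M0 M1 M2 : structure L) (f : M0 -> M2) (g : M1 -> M2) (h : M0 -> M1),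
      @kemb L K M0 M2 f -> @kemb L K M1 M2 g -> (forall x, g (h x) = f x) ->
      @kemb L K M0 M1 h) /\
  (* Tarski-Vaught chain axioms: U is (isomorphic to) the union of the chain *)
  (forall (I : Type) (lt : I -> I -> Prop) (N : I -> structure L)
          (e : forall i j, N i -> N j),
      well_order lt -> inhabited I -> @is_chain L K I lt N e ->
      forall (U : structure L) (u : forall i, N i -> U),
        (forall i, is_embedding (u i)) ->
        (forall i j (x : N i), leo lt i j -> u j (e i j x) = u i x) ->
        (forall y : U, exists i (x : N i), u i x = y) ->
        inK K U /\ (forall i, @kemb L K (N i) U (u i)) /\
        (forall (P : structure L) (g : forall i, N i -> P) (h : U -> P),
            (forall i, @kemb L K (N i) P (g i)) ->
            (forall i (x : N i), h (u i x) = g i x) -> @kemb L K U P h)).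

(** LS(K) = aleph_0 (with the convention LS(K) >= |tau| + aleph_0). *)
Definition LS_is_aleph0 (L : vocab) (K : AECdata L) : Prop :=
  (exists c : fsym L -> nat, injective c) /\
  (exists c : rsym L -> nat, injective c) /\
  (forall (N : structure L) (A : N -> Prop), inK K N ->
     exists (M : structure L) (h : M -> N),
       @kemb L K M N h /\ (forall x, A x -> exists y, h y = x) /\
       exists c : M -> ({x : N | A x} + nat)%type, injective c).

Definition size_aleph0 (L : vocab) (M : structure L) : Prop :=
  exists g : nat -> M, bijective g.

Definition inK0 (L : vocab) (K : AECdata L) (M : structure L) : Prop :=
  inK K M /\ size_aleph0 M.

Definition universal_over (L : vocab) (K : AECdata L) (M0 M1 : structure L)
    (f : M0 -> M1) : Prop :=
  inK0 K M0 /\ inK0 K M1 /\ @kemb L K M0 M1 f /\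
  forall (N : structure L) (g : M0 -> N), inK0 K N -> @kemb L K M0 N g ->
    exists h : N -> M1, @kemb L K N M1 h /\ forall x, h (g x) = f x.

Definition limit_over (L : vocab) (K : AECdata L) (M0 M1 : structure L)
    (f : M0 -> M1) : Prop :=
  inK0 K M0 /\ inK0 K M1 /\ @kemb L K M0 M1 f /\
  exists (I : Type) (lt : I -> I -> Prop) (N : I -> structure L)
         (e : forall i j, N i -> N j) (b t : I) (al : M0 -> N b) (be : N t -> M1),
    (* I is (order-isomorphic to) delta + 1 for a countable limit ordinal delta;
       b is 0 and t is delta *)
    well_order lt /\ (exists c : I -> nat, injective c) /\
    (forall i, leo lt b i) /\ (forall i, leo lt i t) /\ b <> t /\
    (forall i, lt i t -> exists k, lt i k /\ lt k t) /\
    @is_chain L K I lt N e /\ (forall i, inK0 K (N i)) /\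
    (forall j, j <> b -> (forall i, lt i j -> exists k, lt i k /\ lt k j) ->
       forall x : N j, exists i (y : N i), lt i j /\ e i j y = x) /\
    (forall i s, lt i s -> (forall k, ~ (lt i k /\ lt k s)) ->
       universal_over K (e i s)) /\
    (* N_0 = M0 and N_delta = M1 (over the inclusion f) *)
    is_iso al /\ is_iso be /\ (forall x, be (e b t (al x)) = f x).

Definition amalgamation0 (L : vocab) (K : AECdata L) : Prop :=
  forall (M0 M1 M2 : structure L) (f1 : M0 -> M1) (f2 : M0 -> M2),
    inK0 K M0 -> inK0 K M1 -> inK0 K M2 ->
    @kemb L K M0 M1 f1 -> @kemb L K M0 M2 f2 ->
    exists (N : structure L) (g1 : M1 -> N) (g2 : M2 -> N),
      inK0 K N /\ @kemb L K M1 N g1 /\ @kemb L K M2 N g2 /\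
      forall x, g1 (f1 x) = g2 (f2 x).

Definition no_maximal0 (L : vocab) (K : AECdata L) : Prop :=
  forall M : structure L, inK0 K M ->
    exists (N : structure L) (h : M -> N),
      inK0 K N /\ @kemb L K M N h /\ exists y : N, forall x, h x <> y.

Definition categorical0 (L : vocab) (K : AECdata L) : Prop :=
  (exists M, inK0 K M) /\
  forall M N : structure L, inK0 K M -> inK0 K N -> exists h : M -> N, is_iso h.

Definition saturative0 (L : vocab) (K : AECdata L) : Prop :=
  forall (M0 M1 M2 : structure L) (f : M0 -> M1) (g : M1 -> M2),
    inK0 K M2 -> @kemb L K M1 M2 g -> limit_over K f ->
    limit_over K (fun x => g (f x)).

Record gtriple (L : vocab) (M : structure L) := GTriple {
  gN : structure L; gf : M -> gN; ga : gN }.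

Definition gvalid (L : vocab) (K : AECdata L) (M : structure L) (p : gtriple M) : Prop :=
  inK0 K (gN p) /\ @kemb L K M (gN p) (gf p).

Definition Eat (L : vocab) (K : AECdata L) (M : structure L) (p q : gtriple M) : Prop :=
  gvalid K p /\ gvalid K q /\
  exists (N : structure L) (g1 : gN p -> N) (g2 : gN q -> N),
    inK0 K N /\ @kemb L K (gN p) N g1 /\ @kemb L K (gN q) N g2 /\
    (forall x, g1 (gf p x) = g2 (gf q x)) /\ g1 (ga p) = g2 (ga q).

(** |gS(M)| <= aleph_0 for every M in K_{aleph_0}; Galois-type equality is
    the transitive closure of E_at. *)
Definition stable0 (L : vocab) (K : AECdata L) : Prop :=
  forall M : structure L, inK0 K M ->
    exists T : nat -> gtriple M, (forall n, gvalid K (T n)) /\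
      forall p : gtriple M, gvalid K p -> exists n, clos_trans _ (@Eat L K M) p (T n).

Definition omega_chain (L : vocab) (K : AECdata L) (M : nat -> structure L)
    (s : forall i, M i -> M i.+1) (Mw : structure L) (m : forall i, M i -> Mw) : Prop :=
  (forall i, inK0 K (M i)) /\ inK0 K Mw /\
  (forall i, @kemb L K (M i) (M i.+1) (s i)) /\
  (forall i, @kemb L K (M i) Mw (m i)) /\
  (forall i (x : M i), m i.+1 (s i x) = m i x) /\
  (forall y : Mw, exists i (x : M i), m i x = y).

From mathcomp Require Import all_boot.
From mathcomp Require Import boolp classical_sets cardinality.
From Stdlib Require Import PeanoNat Eqdep_dec Wf_nat Relations.
From mathcomp Require Import zify.
Set Implicit Arguments. Unset Strict Implicit. Unset Printing Implicit Defensive.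

(* Enumerate M_omega and build the N_i by recursion.  If N_i is limit under M_i,
   saturativity makes M_{i+1} limit over N_i via a chain <P_j : j <= delta>;
   N_{i+1} is a stage P_k late enough to contain the element of M_omega that is
   due at step i (if it already lies in M_{i+1}).  Both N_{i+1} over N_i and
   M_{i+1} over N_{i+1} are then limit, because every K-extension of a universal
   extension is limit: by categoricity its base is a copy of the base of some
   limit model, which embeds into the universal extension, and saturativity
   passes limitness upwards.  Limit models exist because amalgamation and
   stability give universal extensions (realize all Galois types, omega times),
   and an omega-chain of universal extensions is a limit chain.  Dovetailing the
   enumeration makes the union of the N_i all of M_omega.  Unions of countable
   chains are built directly as direct limits. *)

Section SchroederBernstein.
Local Open Scope classical_set_scope.

Lemma schroeder_bernstein_nat (T : Type) (c : T -> nat) (d : nat -> T) :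
  injective c -> injective d -> exists g : nat -> T, bijective g.
Proof.
move=> inj_c inj_d.
have cT : countable [set: T].
  by apply/countable_injP; exists c => x y _ _; apply: inj_c.
have iT : infinite_set [set: T].
  apply/infiniteP; rewrite -(preimage_setT d).
  exact: card_ge_preimage (fun x y _ _ => inj_d x y).
have /card_bijP[f [f' fK f'K]] := eq_card_nat cT iT.
have valK A (u : [set: A]) : SigSub (mem_set (I : [set: A] (val u))) = u.
  exact: val_inj.
exists (fun n => val (f' (SigSub (mem_set (I : [set: nat] n))))).
exists (fun t => val (f (SigSub (mem_set (I : [set: T] t))))) => [n|t] /=.
  by rewrite valK f'K.
by rewrite valK fK.
Qed.
End SchroederBernstein.

Lemma well_order_ltn : well_order (fun i j : nat => i < j).
Proof.
split; first by move=> i; rewrite ltnn.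
split; first by move=> i j k; apply: ltn_trans.
split; first by move=> i j; case: (ltngtP i j) => H; auto.
by apply: (@well_founded_lt_compat nat id) => x y /ltP.
Qed.

Lemma leo_ltn (i j : nat) : leo (fun i j : nat => i < j) i j -> i <= j.
Proof. by case=> [/ltnW | ->]. Qed.

Lemma well_order_min (I : Type) (lt : I -> I -> Prop) (P : I -> Prop) :
  well_order lt -> (exists x, P x) -> exists x, P x /\ forall y, P y -> ~ lt y x.
Proof.
move=> [_ [_ [_ wf]]] [x Px]; apply: contrapT => nomin.
elim/(well_founded_ind wf): x Px => x IH Px.
by apply: nomin; exists x; split=> // y Py /IH; apply.
Qed.

Lemma well_order_succ (I : Type) (lt : I -> I -> Prop) (i j : I) :
  well_order lt -> lt i j ->
  exists s, lt i s /\ (forall k, ~ (lt i k /\ lt k s)) /\ leo lt s j.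
Proof.
move=> wo lij; have [_ [_ [tot _]]] := wo.
have [s [lis mins]] := well_order_min wo (ex_intro (lt i) j lij).
exists s; split=> //; split; first by move=> k [/mins].
by case: (tot s j) => [|[|/(mins _ lij)]]; [left|right|].
Qed.

Lemma dependent_choice (A : nat -> Type) (B : forall n, A n -> A n.+1 -> Type)
    (P : forall n, A n -> Prop) (R : forall n a b, B n a b -> Prop) (a0 : A 0) :
  P 0 a0 -> (forall n a, P n a -> exists b (w : B n a b), P n.+1 b /\ R n a b w) ->
  exists (f : forall n, A n) (w : forall n, B n (f n) (f n.+1)),
    f 0 = a0 /\ forall n, P n (f n) /\ R n _ _ (w n).
Proof.
move=> P0 step.
have next n (a : {a | P n a}) : {b : A n.+1 & {w : B n (sval a) b | P n.+1 b /\ R n _ _ w}}.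
  have /cid [b /cid [w Hw]] := step n _ (svalP a); exact: existT _ b (exist _ w Hw).
pose fix f n : {a | P n a} :=
  if n is n'.+1 then exist _ (projT1 (next n' (f n'))) (proj1 (svalP (projT2 (next n' (f n')))))
  else exist _ a0 P0.
exists (fun n => sval (f n)), (fun n => sval (projT2 (next n (f n)))).
split=> // n; split; [exact: svalP | exact: proj2 (svalP (projT2 (next n (f n))))].
Qed.

Lemma lift_along_chain (M : nat -> Type) (s : forall i, M i -> M i.+1) (U : Type)
    (m : forall i, M i -> U) :
  (forall i x, m i.+1 (s i x) = m i x) ->
  forall i j (x : M i), i <= j -> exists y : M j, m j y = m i x.
Proof.
move=> ms i j x /subnK <-; elim: (j - i) => [|d [y <-]]; first by exists x.
by exists (s _ y); rewrite ms.
Qed.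

Lemma telescope (Q : nat -> Type) (q : forall n, Q n -> Q n.+1) (X U : Type)
    (u : forall n, Q n -> U) (f : forall n, X -> Q n) :
  (forall n y, u n.+1 (q n y) = u n y) -> (forall n x, q n (f n x) = f n.+1 x) ->
  forall n x, u n (f n x) = u 0 (f 0 x).
Proof. by move=> uq qf; elim=> // n IH x; rewrite -qf uq. Qed.

Section Relocate.
Local Unset Implicit Arguments.
Variables (I : Type) (N : I -> Type) (U : Type) (u : forall i, N i -> U).
Variable default : forall i, N i.

(* Junk value [default j] when [u i x] is not in the image of [u j]. *)
Definition relocate i j (x : N i) : N j :=
  if pselect (exists y, u j y = u i x) is left H then sval (cid H) else default j.

Lemma relocateE i j (x : N i) :
  (exists y, u j y = u i x) -> u j (relocate i j x) = u i x.
Proof. by rewrite /relocate; case: pselect => // H _; exact: svalP (cid H). Qed.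
End Relocate.
Arguments relocate {I N U} u default i j x.
Arguments relocateE {I N U} u default {i j x}.

Section AEC.
Variables (L : vocab) (K : AECdata L) (HK : AEC_axioms K).

Lemma kemb_embedding (M N : structure L) (h : M -> N) : kemb K h -> is_embedding h.
Proof. by case: HK => H _ /H [_ []]. Qed.

Lemma kemb_inj (M N : structure L) (h : M -> N) : kemb K h -> injective h.
Proof. by case/kemb_embedding. Qed.

Lemma iso_kemb (M N : structure L) (h : M -> N) : inK K M -> is_iso h -> kemb K h.
Proof. by case: HK => _ [_ [H _]]; apply: H. Qed.

Lemma kemb_comp (M N P : structure L) (h : M -> N) (g : N -> P) :
  kemb K h -> kemb K g -> kemb K (fun x => g (h x)).
Proof. by case: HK => _ [_ [_ [H _]]]; apply: H. Qed.

Lemma kemb_coherence (M0 M1 M2 : structure L) (f : M0 -> M2) (g : M1 -> M2)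
    (h : M0 -> M1) :
  kemb K f -> kemb K g -> (forall x, g (h x) = f x) -> kemb K h.
Proof. by case: HK => _ [_ [_ [_ [H _]]]]; apply: H. Qed.

Lemma iso_id (M : structure L) : is_iso (fun x : M => x).
Proof. by split; [split; [|split] | move=> y; exists y]. Qed.

Lemma iso_comp (M N P : structure L) (h : M -> N) (g : N -> P) :
  is_iso h -> is_iso g -> is_iso (fun x => g (h x)).
Proof.
move=> [[ih [fh rh]] sh] [[ig [fg rg]] sg]; split; [split; [|split]|].
- by move=> x y /ig /ih.
- by move=> f a; rewrite fh fg.
- by move=> r a; apply: iff_trans (rh r a) _; apply: rg.
- by move=> y; have [z <-] := sg y; have [x <-] := sh z; exists x.
Qed.

Lemma kemb_id (M : structure L) : inK K M -> kemb K (fun x : M => x).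
Proof. by move/iso_kemb; apply; apply: iso_id. Qed.

Section OmegaUnion.
Local Unset Implicit Arguments.
Variables (Q : nat -> structure L) (q : forall i, Q i -> Q i.+1).
Hypothesis inK0_Q : forall i, inK0 K (Q i).
Hypothesis kemb_q : forall i, kemb K (q i).

Definition stage_elt := {i : nat & Q i}.
Notation mk i x := (@existT nat (fun j => carrier (Q j)) i x).

Definition shift (p : stage_elt) : stage_elt := mk (projT1 p).+1 (q _ (projT2 p)).

Lemma mk_inj i (x y : Q i) : mk i x = mk i y -> x = y.
Proof. exact: (inj_pair2_eq_dec _ Nat.eq_dec (fun j => carrier (Q j))). Qed.

Lemma shift_inj : injective shift.
Proof.
move=> [i x] [j y] /= E; have [ij] := congr1 (@projT1 _ _) E.
by subst j; move: E => /mk_inj /(kemb_inj (kemb_q i)) /= ->.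
Qed.

Lemma iter_shift_inj d : injective (iter d shift).
Proof. by elim: d => // d IH x y /= /shift_inj /IH. Qed.

Lemma iter_shiftC m n p : iter m shift (iter n shift p) = iter n shift (iter m shift p).
Proof. by rewrite -!iterD addnC. Qed.

(* The direct limit is the disjoint union of the stages modulo [stage_equiv]:
   two elements are identified when they agree once both are pushed to the sum
   of their stages. *)
Definition stage_equiv (p p' : stage_elt) : Prop :=
  iter (projT1 p') shift p = iter (projT1 p) shift p'.

Lemma stage_equiv_trans p1 p2 p3 : stage_equiv p1 p2 -> stage_equiv p2 p3 -> stage_equiv p1 p3.
Proof.
rewrite /stage_equiv => E12 E23; apply: (@iter_shift_inj (projT1 p2)).
by rewrite [LHS]iter_shiftC E12 iter_shiftC E23 iter_shiftC.
Qed.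

Lemma stage_equiv_shift p : stage_equiv (shift p) p.
Proof. by rewrite /stage_equiv /= -iterSr. Qed.

Lemma stage_equiv_class p p' : stage_equiv p p' -> stage_equiv p = stage_equiv p'.
Proof.
move=> E; apply: funext => r; apply: propext; split; first exact: stage_equiv_trans.
by apply: stage_equiv_trans; rewrite /stage_equiv.
Qed.

Definition union_carrier := {C : stage_elt -> Prop | exists p, C = stage_equiv p}.

Definition to_union i (x : Q i) : union_carrier :=
  exist _ (stage_equiv (mk i x)) (ex_intro _ _ erefl).

Lemma to_union_eq i j (x : Q i) (y : Q j) :
  to_union i x = to_union j y <-> stage_equiv (mk i x) (mk j y).
Proof.
split=> [/(congr1 sval) /= ->|/stage_equiv_class E]; first by rewrite /stage_equiv.
by apply: eq_exist.
Qed.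

Lemma to_union_inj i : injective (to_union i).
Proof.
move=> x y /to_union_eq; rewrite /stage_equiv /=.
by move/iter_shift_inj/mk_inj.
Qed.

Lemma to_union_shift i (x : Q i) : to_union i.+1 (q i x) = to_union i x.
Proof. by apply/to_union_eq; exact: (stage_equiv_shift (mk i x)). Qed.

Lemma to_union_surj (y : union_carrier) : exists i x, to_union i x = y.
Proof. by case: y => C [[i x] EC]; exists i, x; apply: eq_exist. Qed.

Definition enum_stage i : nat -> Q i := sval (cid (proj2 (inK0_Q i))).

Definition transition := relocate to_union (fun i => enum_stage i 0).

Lemma transitionE i j (x : Q i) : i <= j -> to_union j (transition i j x) = to_union i x.
Proof. by move=> ij; apply: relocateE; apply: lift_along_chain to_union_shift _ _ _ ij. Qed.

Lemma transition_id i (x : Q i) : transition i i x = x.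
Proof. by apply: to_union_inj; rewrite transitionE. Qed.

Lemma transitionS i j (x : Q i) : i <= j -> transition i j.+1 x = q j (transition i j x).
Proof. by move=> ij; apply: to_union_inj; rewrite to_union_shift !transitionE // leqW. Qed.

Lemma transition_comp i j k (x : Q i) :
  i <= j -> j <= k -> transition j k (transition i j x) = transition i k x.
Proof. by move=> ij jk; apply: to_union_inj; rewrite !transitionE // (leq_trans ij). Qed.

Lemma kemb_transition i j : i <= j -> kemb K (transition i j).
Proof.
move/subnK <-; elim: (j - i) => [|d IH] /=.
  have -> : transition i i = id by apply: funext => x; apply: transition_id.
  exact/kemb_id/(proj1 (inK0_Q i)).
have -> : transition i (d + i).+1 = fun x => q _ (transition i (d + i) x).
  by apply: funext => x; apply: transitionS; rewrite leq_addl.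
exact: kemb_comp IH (kemb_q _).
Qed.

Lemma common_stage n (a : 'I_n -> union_carrier) :
  exists p : {j & 'I_n -> Q j}, forall k, to_union _ (projT2 p k) = a k.
Proof.
have [st Hst] := choice (fun k => to_union_surj (a k)).
pose j := \max_(k < n) st k.
have lift k : exists y : Q j, to_union j y = a k.
  have [x <-] := Hst k.
  by exists (transition _ _ x); apply: transitionE; exact: (@leq_bigmax _ st k).
by have [y Hy] := choice lift; exists (existT _ j y).
Qed.

Lemma to_union_congr (n : nat) (R : Type) (F : forall i, ('I_n -> Q i) -> R)
    i j (x : 'I_n -> Q i) (y : 'I_n -> Q j) :
  (forall l (a : 'I_n -> Q l) m, l <= m -> F m (fun k => transition l m (a k)) = F l a) ->
  (forall k, to_union i (x k) = to_union j (y k)) -> F i x = F j y.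
Proof.
move=> Ft Exy; rewrite -(Ft _ x (maxn i j)) ?leq_maxl // -(Ft _ y (maxn i j)) ?leq_maxr //.
congr F; apply: funext => k; apply: to_union_inj.
by rewrite !transitionE ?leq_maxl ?leq_maxr.
Qed.

Lemma transition_embedding i j : i <= j -> is_embedding (transition i j).
Proof. by move/kemb_transition/kemb_embedding. Qed.

Definition union_fint f (a : 'I_(farity f) -> union_carrier) : union_carrier :=
  let p := sval (cid (common_stage _ a)) in to_union _ (fint (projT2 p)).

Definition union_rint r (a : 'I_(rarity r) -> union_carrier) : Prop :=
  exists j (y : 'I_(rarity r) -> Q j), (forall k, to_union j (y k) = a k) /\ rint y.

Definition union_structure : structure L :=
  @Structure L union_carrier union_fint union_rint.

Lemma to_union_embedding i : is_embedding (to_union i : Q i -> union_structure).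
Proof.
split; first exact: to_union_inj.
split=> [f x | r x].
  rewrite /= /union_fint; case: cid => p /= Ep.
  apply: (to_union_congr _ _ (fun l a => to_union l (fint a))) => [l a m lm|k].
    by rewrite -(proj1 (proj2 (transition_embedding _ _ lm))) transitionE.
  by rewrite Ep.
split=> [|[j [y [Ey ry]]]]; first by exists i, x.
suff <- : rint y = rint x by [].
apply: (to_union_congr _ _ (fun l a => rint a)) => // l a m lm /=.
apply: propext; apply: iff_sym; exact: (proj2 (proj2 (transition_embedding _ _ lm)) r a).
Qed.

Definition representative (C : union_carrier) : stage_elt := sval (cid (svalP C)).

Lemma to_union_representative C : to_union _ (projT2 (representative C)) = C.
Proof.
rewrite /representative; case: cid => -[i x] /= E.
by case: C E => C HC /= E; apply: eq_exist.
Qed.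

Lemma countable_union : exists g : nat -> union_carrier, bijective g.
Proof.
have enc i : {c : Q i -> nat | injective c}.
  apply: cid; case: (proj2 (inK0_Q i)) => g [g' _ g'K]; exists g'; exact: can_inj g'K.
pose c C := pickle (projT1 (representative C), sval (enc _) (projT2 (representative C))).
apply: (@schroeder_bernstein_nat _ c (fun n => to_union 0 (enum_stage 0 n))).
  move=> C C' /(pcan_inj pickleK) [Ei Ex].
  rewrite -(to_union_representative C) -(to_union_representative C').
  move: (representative C) (representative C') Ei Ex => [i x] [j y] /= Eij; subst j.
  by move/(svalP (enc i)) ->.
move=> n n' /to_union_inj; apply: bij_inj; exact: svalP (cid (proj2 (inK0_Q 0))).
Qed.

Lemma omega_union : exists (U : structure L) (u : forall i, Q i -> U),
  @omega_chain L K Q q U u.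
Proof.
have chain : is_chain K (fun i j : nat => i < j) transition.
  split; first by move=> i j /leo_ltn; apply: kemb_transition.
  split; first exact: transition_id.
  by move=> i j k x /leo_ltn ij /leo_ltn jk; apply: transition_comp.
have [_ [_ [_ [_ [_ TV]]]]] := HK.
have [inU [kemb_u _]] := TV _ _ _ _ well_order_ltn (inhabits 0) chain
  union_structure to_union to_union_embedding
  (fun i j x ij => transitionE _ _ x (leo_ltn ij)) to_union_surj.
exists union_structure, to_union.
by do !split=> //; [exact: countable_union | exact: to_union_shift | exact: to_union_surj].
Qed.
End OmegaUnion.


Lemma relocate_chain (I : Type) (lt : I -> I -> Prop) (N : I -> structure L)
    (U : structure L) (u : forall i, N i -> U) (d : forall i, N i) :
  (forall i, kemb K (u i)) ->
  (forall i j, leo lt i j -> forall x : N i, exists y, u j y = u i x) ->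
  is_chain K lt (relocate u d).
Proof.
move=> ku lift; have uE i j x (ij : leo lt i j) := relocateE u d (lift i j ij x).
split; first by move=> i j ij; exact: (kemb_coherence (ku i) (ku j) (uE i j ^~ ij)).
split; first by move=> i x; apply: (kemb_inj (ku i)); apply: uE; right.
move=> i j k x ij jk; apply: (kemb_inj (ku k)); rewrite uE // uE //.
have [y Ey] := lift j k jk (relocate u d i j x).
by rewrite relocateE //; exists y; rewrite Ey uE.
Qed.

Lemma omega_chain_universal (Q : nat -> structure L) (q : forall i, Q i -> Q i.+1)
    (U : structure L) (u : forall i, Q i -> U) :
  @omega_chain L K Q q U u ->
  forall (P : structure L) (g : forall i, Q i -> P), (forall i, kemb K (g i)) ->
    (forall i x, g i.+1 (q i x) = g i x) ->
    exists h : U -> P, kemb K h /\ forall i x, h (u i x) = g i x.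
Proof.
move=> [iQ [_ [_ [ku [uq cov]]]]] P g kg gq.
have ugq i x : (u i.+1 (q i x), g i.+1 (q i x)) = (u i x, g i x) by rewrite uq gq.
have ug_lift := lift_along_chain (m := fun i x => (u i x, g i x)) ugq.
have u_g i j x y : u i x = u j y -> g i x = g j y.
  have [x' [ux gx]] := ug_lift i (maxn i j) x (leq_maxl i j).
  have [y' [uy gy]] := ug_lift j (maxn i j) y (leq_maxr i j).
  by rewrite -ux -uy -gx -gy => /(kemb_inj (ku _)) ->.
have [h hE] : exists h : U -> P, forall i x, h (u i x) = g i x.
  suff /choice [h hE] : forall y, exists z, forall i x, u i x = y -> z = g i x.
    by exists h => i x; apply: hE.
  move=> y; have [i0 [x0 <-]] := cov y.
  by exists (g i0 x0) => i x /u_g.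
have [_ [_ [_ [_ [_ TV]]]]] := HK.
have lift i j : leo (fun i j : nat => i < j) i j -> forall x, exists y, u j y = u i x.
  by move/leo_ltn => ij x; apply: lift_along_chain uq _ _ _ ij.
pose d i := sval (cid (proj2 (iQ i))) 0.
have chain := relocate_chain d ku lift.
have [_ [_ univ]] := TV _ _ _ _ well_order_ltn (inhabits 0) chain U u
  (fun i => kemb_embedding (ku i)) (fun i j x ij => relocateE u d (lift i j ij x)) cov.
by exists h; split=> //; exact: univ kg hE.
Qed.
End AEC.
Arguments omega_union {L K} HK {Q} q inK0_Q kemb_q.

Section GaloisTypes.
Variables (L : vocab) (K : AECdata L).
Hypotheses (HK : AEC_axioms K) (HAP : amalgamation0 K).

Lemma Eat_trans (M : structure L) (p q r : gtriple M) :
  Eat K p q -> Eat K q r -> Eat K p r.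
Proof.
move=> [vp [vq [N1 [g1 [g2 [iN1 [kg1 [kg2 [E1 Ea1]]]]]]]]].
move=> [_ [vr [N2 [h1 [h2 [iN2 [kh1 [kh2 [E2 Ea2]]]]]]]]].
have [R [k1 [k2 [iR [kk1 [kk2 Ek]]]]]] := HAP (proj1 vq) iN1 iN2 kg2 kh1.
split=> //; split=> //; exists R, (fun x => k1 (g1 x)), (fun x => k2 (h2 x)).
do !split=> //; [exact: (kemb_comp HK kg1 kk1) | exact: (kemb_comp HK kh2 kk2) | | ].
- by move=> x; rewrite E1 Ek E2.
- by rewrite Ea1 Ek Ea2.
Qed.

Lemma Eat_of_clos_trans (M : structure L) (p q : gtriple M) :
  clos_trans _ (@Eat L K M) p q -> Eat K p q.
Proof. by elim=> // x y z _ H1 _ H2; apply: Eat_trans H1 H2. Qed.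

Lemma Eat_push (M Z W : structure L) (p : gtriple M) (f : M -> Z) (c : Z) (w : Z -> W) :
  Eat K p (GTriple f c) -> kemb K w -> inK0 K W ->
  Eat K p (GTriple (fun x => w (f x)) (w c)).
Proof.
move=> E kw iW; apply: (Eat_trans E); have [_ [[iZ kf] _]] := E.
split=> //; split; first by split=> //; exact: (kemb_comp HK kf kw).
exists W, w, id; do !split=> //; exact: (kemb_id HK (proj1 iW)).
Qed.

Definition realizes_gtypes (X Y : structure L) (f : X -> Y) : Prop :=
  forall p : gtriple X, gvalid K p -> exists c, Eat K p (GTriple f c).

Lemma exists_realizing_ext (X : structure L) : stable0 K -> inK0 K X ->
  exists (Y : structure L) (f : X -> Y), inK0 K Y /\ kemb K f /\ realizes_gtypes f.
Proof.
move=> Hstab iX; have [T [vT HT]] := Hstab _ iX.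
pose P (n : nat) (a : {Z : structure L & X -> Z}) :=
  inK0 K (projT1 a) /\ kemb K (projT2 a) /\
  forall k, k < n -> exists c, Eat K (T k) (GTriple (projT2 a) c).
pose R (n : nat) (a b : {Z : structure L & X -> Z}) (w : projT1 a -> projT1 b) :=
  kemb K w /\ forall x, w (projT2 a x) = projT2 b x.
have [|n [Z f] /= [iZ [kf realT]]|F [w [_ HF]]] :=
  @dependent_choice _ _ P R (existT _ X id).
- by split=> //; split=> //; exact: (kemb_id HK (proj1 iX)).
- have [W [w1 [w2 [iW [kw1 [kw2 Ew]]]]]] := HAP iX iZ (proj1 (vT n)) kf (proj2 (vT n)).
  exists (existT _ W (fun x => w1 (f x))), w1; do !split=> //; first exact: (kemb_comp HK kf kw1).
  move=> k; rewrite ltnS leq_eqVlt => /orP [/eqP ->|/realT [c Ec]]; last first.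
    by exists (w1 c); exact: Eat_push Ec kw1 iW.
  exists (w2 (ga (T n))); split; first exact: vT.
  split; first by split=> //; exact: (kemb_comp HK kf kw1).
  exists W, w2, id; do !split=> //; first exact: (kemb_id HK (proj1 iW)).
  by move=> x; rewrite /= Ew.
have [U [u [_ [iU [_ [ku [uw _]]]]]]] :=
  omega_union HK w (fun n => proj1 (proj1 (HF n))) (fun n => proj1 (proj2 (HF n))).
have uF := telescope uw (fun n => proj2 (proj2 (HF n))).
exists U, (fun x => u 0 (projT2 (F 0) x)); split=> //; split.
  exact: (kemb_comp HK (proj1 (proj2 (proj1 (HF 0)))) (ku 0)).
move=> p vp; have [k /Eat_of_clos_trans Epk] := HT p vp.
have [c Ec] := proj2 (proj2 (proj1 (HF k.+1))) k (ltnSn k).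
exists (u k.+1 c); apply: Eat_trans Epk _.
by rewrite -(funext (uF k.+1)); exact: Eat_push Ec (ku _) iU.
Qed.

(* An extension [N] of [Xs 0] is embedded element by element: at stage [n] the
   Galois type of the [n]-th element of [N] over [Xs n] is realized in [Xs n.+1]. *)
Lemma realizing_union_universal (Xs : nat -> structure L) (w : forall n, Xs n -> Xs n.+1)
    (U : structure L) (u : forall n, Xs n -> U) :
  @omega_chain L K Xs w U u -> (forall n, realizes_gtypes (w n)) -> universal_over K (u 0).
Proof.
move=> Uchain real; have [iXs [iU [_ [ku _]]]] := Uchain; do 3!split=> //.
move=> N g iN kg; have [a [a' _ a'K]] := proj2 iN.
pose A n := {Z : structure L & ((N -> Z) * (Xs n -> Z))%type}.
pose P (n : nat) (b : A n) := inK0 K (projT1 b) /\ kemb K (projT2 b).1 /\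
  kemb K (projT2 b).2 /\ forall j, j < n -> exists y, (projT2 b).2 y = (projT2 b).1 (a j).
pose R (n : nat) (b : A n) (b' : A n.+1) (z : projT1 b -> projT1 b') := kemb K z /\
  (forall y, z ((projT2 b).1 y) = (projT2 b').1 y) /\
  (forall y, z ((projT2 b).2 y) = (projT2 b').2 (w n y)).
have [|n [Z [gg hh]] /= [iZ [kgg [khh cov]]]|G [z [G0 HG]]] :=
  @dependent_choice A _ P R (existT _ N (id, g)).
- by split=> //; split; [exact: (kemb_id HK (proj1 iN)) | split].
- have [c [_ [_ [Z2 [z1 [z2 [iZ2 [kz1 [kz2 [Ez Eza]]]]]]]]]] :=
    real n (GTriple hh (gg (a n))) (conj iZ khh).
  exists (existT _ Z2 ((fun y => z1 (gg y)), z2)), z1; do !split=> //=.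
  + exact: (kemb_comp HK kgg kz1).
  + move=> j; rewrite ltnS leq_eqVlt => /orP [/eqP ->|/cov [y /= Hy]]; first by exists c.
    by exists (w n y); rewrite -Hy; exact: esym (Ez y).
- pose gg n := (projT2 (G n)).1; pose hh n := (projT2 (G n)).2.
  have [V [v [_ [_ [_ [kv [vz _]]]]]]] := @omega_union _ _ HK (fun n => projT1 (G n)) z
    (fun n => proj1 (proj1 (HG n))) (fun n => proj1 (proj2 (HG n))).
  have vgg := telescope vz (fun n => proj1 (proj2 (proj2 (HG n)))).
  have vhh n x : v n.+1 (hh n.+1 (w n x)) = v n (hh n x).
    by rewrite /hh -(proj2 (proj2 (proj2 (HG n)))) vz.
  have [H [kH Hu]] := omega_chain_universal HK Uchain (g := fun n x => v n (hh n x))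
    (fun n => kemb_comp HK (proj1 (proj2 (proj2 (proj1 (HG n))))) (kv n)) vhh.
  have cover y : exists x, H x = v 0 (gg 0 y).
    rewrite -(a'K y); have [y0 Ey0] := proj2 (proj2 (proj2 (proj1 (HG (a' y).+1)))) _ (ltnSn _).
    by exists (u _ y0); rewrite Hu /hh Ey0; exact: vgg.
  have [h hE] := choice cover.
  have kG0 : kemb K (fun y => v 0 (gg 0 y)).
    exact: (kemb_comp HK (proj1 (proj2 (proj1 (HG 0)))) (kv 0)).
  exists h; split; first exact: (kemb_coherence HK kG0 kH hE).
  have gh0 x : gg 0 (g x) = hh 0 x by rewrite /gg /hh G0.
  by move=> x; apply: (kemb_inj HK kH); rewrite hE Hu gh0.
Qed.

Lemma exists_universal_ext (X : structure L) : stable0 K -> inK0 K X ->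
  exists (Y : structure L) (f : X -> Y), universal_over K f.
Proof.
move=> Hstab iX.
pose R (n : nat) (Z Z' : structure L) (w : Z -> Z') := kemb K w /\ realizes_gtypes w.
have [//|n Z iZ|F [w [F0 HF]]] := @dependent_choice _ _ (fun _ => inK0 K) R X.
  by have [Y [w [iY Hw]]] := exists_realizing_ext Hstab iZ; exists Y, w.
have [U [u Uchain]] :=
  omega_union HK w (fun n => proj1 (HF n)) (fun n => proj1 (proj2 (HF n))).
have := realizing_union_universal Uchain (fun n => proj2 (proj2 (HF n))).
by move: (u 0); rewrite F0 => f Uf; exists U, f.
Qed.
End GaloisTypes.

(* The ordinal omega + 1, with [None] standing for omega. *)
Definition lt_omega_succ (i j : option nat) : Prop :=
  match i, j with
  | Some a, Some b => a < b
  | Some _, None => True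
  | None, _ => False
  end.

Lemma well_order_lt_omega_succ : well_order lt_omega_succ.
Proof.
split; first by case=> [a|] //=; rewrite ltnn.
split; first by move=> [a|] [b|] [c|] //=; apply: ltn_trans.
split.
  move=> [a|] [b|] /=; [|by left|by right; right|by right; left].
  by case: (ltngtP a b) => ab; [left|right; right|right; left; rewrite ab].
have acc_some k : Acc lt_omega_succ (Some k).
  elim/ltn_ind: k => k IH; constructor=> -[j|] /= jk; [exact: IH | case: jk].
by case=> [k|]; first exact: acc_some; constructor=> -[j|] // _; exact: acc_some.
Qed.

Lemma leo_omega_succ_some a b : leo lt_omega_succ (Some a) (Some b) -> a <= b.
Proof. by case=> [/ltnW|[->]]. Qed.

Lemma lt_omega_succ_cover a c : lt_omega_succ (Some a) c ->
  (forall k, ~ (lt_omega_succ (Some a) k /\ lt_omega_succ k c)) -> c = Some a.+1.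
Proof.
have step : lt_omega_succ (Some a) (Some a.+1) by exact: ltnSn.
case: c => [c|] /= ac next; last by case: (next (Some a.+1)).
congr Some; apply/eqP; rewrite eqn_leq ac andbT leqNgt; apply/negP => lt_c.
exact: (next (Some a.+1)).
Qed.

Lemma lt_omega_succ_limit j : j <> Some 0 ->
  (forall i, lt_omega_succ i j -> exists k, lt_omega_succ i k /\ lt_omega_succ k j) -> j = None.
Proof.
case: j => [[|j]|] // _ jlim; have [[k|] [/= jk kj]] // := jlim (Some j) (ltnSn j).
by rewrite ltnS leqNgt jk in kj.
Qed.

Section LimitModels.
Variables (L : vocab) (K : AECdata L) (HK : AEC_axioms K).

Lemma universal_union_limit (Q : nat -> structure L) (q : forall n, Q n -> Q n.+1)
    (U : structure L) (u : forall n, Q n -> U) :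
  @omega_chain L K Q q U u -> (forall n, universal_over K (q n)) -> limit_over K (u 0).
Proof.
move=> [iQ [iU [kq [ku [uq cov]]]]] univ; do 3!split=> //.
pose N i : structure L := if i is Some k then Q k else U.
pose uo i : N i -> U := if i is Some k then u k else fun x => x.
pose pt k := sval (cid (proj2 (iQ k))) 0.
pose d i : N i := if i is Some k then pt k else u 0 (pt 0).
have kuo i : kemb K (uo i).
  by case: i => [k|]; [exact: ku | exact (kemb_id HK (proj1 iU))].
have lift i j : leo lt_omega_succ i j -> forall x, exists y, uo j y = uo i x.
  case: i j => [a|] [b|] ij x; last by exists x.
  - exact: lift_along_chain uq _ _ _ (leo_omega_succ_some ij).
  - by exists (u a x).
  - by case: ij => // -[].
pose e := relocate uo d.
have uoE i j x (ij : leo lt_omega_succ i j) : uo j (e i j x) = uo i x.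
  exact (relocateE uo d (lift i j ij x)).
exists (option nat), lt_omega_succ, N, e, (Some 0), None, id, id.
split; first exact: well_order_lt_omega_succ.
split; first by exists (fun i => if i is Some k then k.+1 else 0) => -[a|] [b|] //= [->].
split; first by case=> [[|k]|]; [right|left|left].
split; first by case=> [k|]; [left|right].
split; first by [].
split; first by case=> [a _|[]]; exists (Some a.+1); split=> //=; exact: ltnSn.
split; first exact (relocate_chain HK d kuo lift).
split; first by case.
split.
  move=> j jb /(lt_omega_succ_limit jb) -> x; have [i [y <-]] := cov x.
  by exists (Some i), y; split=> //; exact: (uoE (Some i) None y (or_introl I)).
split.
  move=> [a|] c // ac /(lt_omega_succ_cover ac) ->.
  have -> : e (Some a) (Some a.+1) = q a.
    apply: funext => x; apply: (kemb_inj HK (ku a.+1)).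
    by rewrite uq; exact: (uoE (Some a) (Some a.+1) x (or_introl (ltnSn a))).
  exact: univ.
split; first exact: iso_id.
split; first exact: iso_id.
by move=> x; exact: (uoE (Some 0) None x (or_introl I)).
Qed.

Lemma exists_limit : amalgamation0 K -> stable0 K -> (exists M, inK0 K M) ->
  exists (X Y : structure L) (f : X -> Y), limit_over K f.
Proof.
move=> HAP Hstab [X iX].
pose R (n : nat) (Z Z' : structure L) (w : Z -> Z') := universal_over K w.
have [//|n Z iZ|F [w [_ HF]]] := @dependent_choice _ _ (fun _ => inK0 K) R X.
  have [Y [w Uw]] := exists_universal_ext HK HAP Hstab iZ.
  by exists Y, w; split=> //; exact: (proj1 (proj2 Uw)).
have [U [u Uchain]] := omega_union HK w (fun n => proj1 (HF n))
  (fun n => proj1 (proj2 (proj2 (proj2 (HF n))))).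
by exists (F 0), U, (u 0); exact: universal_union_limit Uchain (fun n => proj2 (HF n)).
Qed.

Lemma limit_over_precomp_iso (X Y W : structure L) (f : X -> Y) (psi : W -> X) :
  limit_over K f -> inK0 K W -> is_iso psi -> limit_over K (fun x => f (psi x)).
Proof.
move=> [iX [iY [kf [I [lt [N [e [b [t [al [be H]]]]]]]]]]] iW iso_psi.
split=> //; split=> //; split.
  exact: (kemb_comp HK (iso_kemb HK (proj1 iW) iso_psi) kf).
exists I, lt, N, e, b, t, (fun x => al (psi x)), be.
move: H => [wo [c [hb [ht [bt [lim [ch [iN [cont [uni [ial [ibe E]]]]]]]]]]]].
do 10!(split; first by []).
by split; [exact: iso_comp iso_psi ial | split=> // x; exact: E].
Qed.

Lemma limit_over_postcomp_iso (X Y Z : structure L) (f : X -> Y) (phi : Y -> Z) :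
  limit_over K f -> inK0 K Z -> is_iso phi -> limit_over K (fun x => phi (f x)).
Proof.
move=> [iX [iY [kf [I [lt [N [e [b [t [al [be H]]]]]]]]]]] iZ iso_phi.
split=> //; split=> //; split; first exact: (kemb_comp HK kf (iso_kemb HK (proj1 iY) iso_phi)).
exists I, lt, N, e, b, t, al, (fun y => phi (be y)).
move: H => [wo [c [hb [ht [bt [lim [ch [iN [cont [uni [ial [ibe E]]]]]]]]]]]].
do 11!(split; first by []).
by split; [exact: iso_comp ibe iso_phi | move=> x; rewrite E].
Qed.
End LimitModels.

Section Saturative.
Variables (L : vocab) (K : AECdata L).
Hypotheses (HK : AEC_axioms K) (HAP : amalgamation0 K) (Hstab : stable0 K).
Hypotheses (Hcat : categorical0 K) (Hsat : saturative0 K).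

(* By categoricity [C] is a copy of the base of some limit pair, which then
   embeds into [D] over [C]; saturativity passes limitness up to [E]. *)
Lemma limit_over_universal_ext (C D E : structure L) (u : C -> D) (w : D -> E) :
  universal_over K u -> kemb K w -> inK0 K E -> limit_over K (fun x => w (u x)).
Proof.
move=> [iC [_ [_ univ]]] kw iE.
have [X [Y [f Hf]]] := exists_limit HK HAP Hstab (proj1 Hcat).
have [psi iso_psi] := proj2 Hcat _ _ iC (proj1 Hf).
have Hfpsi := limit_over_precomp_iso HK Hf iC iso_psi.
have [_ [iY [kfpsi _]]] := Hfpsi.
have [h [kh hE]] := univ Y _ iY kfpsi.
have := Hsat iE (kemb_comp HK kh kw) Hfpsi.
by congr (limit_over K); apply: funext => x; rewrite hE.
Qed.

Lemma limit_chain_map (I : Type) (lt : I -> I -> Prop) (N : I -> structure L)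
    (e : forall i j, N i -> N j) :
  well_order lt -> is_chain K lt e -> (forall i, inK0 K (N i)) ->
  (forall i s, lt i s -> (forall k, ~ (lt i k /\ lt k s)) -> universal_over K (e i s)) ->
  forall i j, lt i j -> limit_over K (e i j).
Proof.
move=> wo [ke [_ ecomp]] iN univ i j ij.
have [s [lt_is [succ sj]]] := well_order_succ wo ij.
have := limit_over_universal_ext (univ i s lt_is succ) (ke s j sj) (iN j).
by congr (limit_over K); apply: funext => x; rewrite ecomp //; left.
Qed.

(* Saturativity makes [M2] limit over [Nn]; the new model is a stage of that
   limit chain late enough to contain [x]. *)
Lemma limit_step (Nn M1 M2 : structure L) (e : Nn -> M1) (s : M1 -> M2) (x : M2) :
  limit_over K e -> kemb K s -> inK0 K M2 ->
  exists (Nn' : structure L) (e' : Nn' -> M2) (t : Nn -> Nn'),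
    limit_over K e' /\ limit_over K t /\ (forall y, e' (t y) = s (e y)) /\
    exists z, e' z = x.
Proof.
move=> He ks iM2; have [iNn _] := He.
have [_ [_ [_ [I [lt [P [ep [b [t [al [be H]]]]]]]]]]] := Hsat iM2 ks He.
move: H => [wo [_ [hb [_ [bt [lim [ch [iP [cont [univ [ial [ibe E]]]]]]]]]]]].
have [[_ [tr _]] [_ [_ epcomp]]] := (wo, ch).
have [w0 <-] := proj2 ibe x.
have [k0 [z0 [k0t <-]]] := cont t (fun bt' => bt (esym bt')) lim w0.
have [k [k0k kt]] := lim k0 k0t.
have bk : lt b k by case: (hb k0) => [bk0|->] //; exact: tr bk0 k0k.
have limit_ep := limit_chain_map wo ch iP univ.
exists (P k), (fun z => be (ep k t z)), (fun y => ep b k (al y)).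
split; first exact: (limit_over_postcomp_iso HK (limit_ep _ _ kt) iM2 ibe).
split; first exact: (limit_over_precomp_iso HK (limit_ep _ _ bk) iNn ial).
split; first by move=> y; rewrite epcomp; [exact: E | left | left].
by exists (ep k0 k z0); rewrite epcomp //; left.
Qed.

Lemma limit_chain_below (M : nat -> structure L) (s : forall i, M i -> M i.+1)
    (Mw : structure L) (m : forall i, M i -> Mw) (X0 : structure L) (e0 : X0 -> M 0)
    (target : nat -> Mw) :
  @omega_chain L K M s Mw m -> limit_over K e0 ->
  exists (N : nat -> structure L) (t : forall i, N i -> N i.+1) (e : forall i, N i -> M i),
    (forall i, limit_over K (e i)) /\ (forall i, limit_over K (t i)) /\
    (forall i x, e i.+1 (t i x) = s i (e i x)) /\
    (forall i x, m i.+1 x = target i -> exists z, e i.+1 z = x).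
Proof.
move=> [iM [_ [ks [km _]]]] He0.
pose A i := {Nn : structure L & Nn -> M i}.
pose R i (a : A i) (b : A i.+1) (t : projT1 a -> projT1 b) := limit_over K t /\
  (forall x, projT2 b (t x) = s i (projT2 a x)) /\
  (forall x, m i.+1 x = target i -> exists z, projT2 b z = x).
have [//|i [Nn e] /= He|F [t [_ HF]]] :=
  @dependent_choice A _ (fun i a => limit_over K (projT2 a)) R (existT _ X0 e0).
  have [x hx] : exists x : M i.+1, forall y, m i.+1 y = target i -> y = x.
    case: (pselect (exists x, m i.+1 x = target i)) => [[x Ex]|no_x].
      by exists x => y; rewrite -Ex; exact: (kemb_inj HK (km _)).
    by exists (sval (cid (proj2 (iM i.+1))) 0) => y Ey; case: no_x; exists y.
  have [Nn' [e' [t [He' [Ht [Ee' [z Ez]]]]]]] := limit_step x He (ks i) (iM i.+1).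
  by exists (existT _ Nn' e'), t; do 3!split=> //; move=> y /hx ->; exists z.
exists (fun i => projT1 (F i)), t, (fun i => projT2 (F i)).
split; first by move=> i; case: (HF i).
split; first by move=> i; case: (HF i) => _ [].
by split=> i; case: (HF i) => _ [_ []].
Qed.
End Saturative.

Lemma sqrt_remainder_unbounded (j l : nat) :
  exists i, l <= i /\ i - Nat.sqrt i * Nat.sqrt i = j.
Proof.
exists ((j + l) * (j + l) + j); split; first by nia.
have -> : Nat.sqrt ((j + l) * (j + l) + j) = j + l.
  by apply: Nat.sqrt_unique; split; nia.
by lia.
Qed.

Theorem lemma8p3 (L : vocab) (K : AECdata L)
  (HK : AEC_axioms K) (HLS : LS_is_aleph0 K) (HAP : amalgamation0 K)
  (HNM : no_maximal0 K) (Hstab : stable0 K) (Hcat : categorical0 K)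
  (Hsat : saturative0 K)
  (M : nat -> structure L) (s : forall i, M i -> M i.+1) (Mw : structure L)
  (m : forall i, M i -> Mw) (HM : @omega_chain L K M s Mw m) :
  exists (N : nat -> structure L) (t : forall i, N i -> N i.+1)
         (n : forall i, N i -> Mw) (e : forall i, N i -> M i),
    @omega_chain L K N t Mw n /\
    (forall i (x : N i), m i (e i x) = n i x) /\
    (forall i, limit_over K (e i)) /\
    (forall i, limit_over K (t i)).
Proof.
have [iM [iMw [ks [km [ms mcov]]]]] := HM.
have [X0 [Y0 [f0 Hf0]]] := exists_limit HK HAP Hstab (proj1 Hcat).
have [phi iso_phi] := proj2 Hcat _ _ (proj1 (proj2 Hf0)) (iM 0).
have He0 := limit_over_postcomp_iso HK Hf0 (iM 0) iso_phi.
have [enum [enum' _ enumK]] := proj2 iMw.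
(* Step [i] absorbs the [(i - isqrt i ^ 2)]-th element of [Mw]; every index
   recurs at arbitrarily late steps. *)
pose target i := enum (i - Nat.sqrt i * Nat.sqrt i).
have [N [t [e [limE [limt [tE tcov]]]]]] :=
  limit_chain_below HK HAP Hstab Hcat Hsat target HM He0.
exists N, t, (fun i x => m i (e i x)), e; split; last by [].
split; first by move=> i; case: (limE i).
split=> //; split; first by move=> i; case: (limt i) => _ [_ []].
split; first by move=> i; case: (limE i) => _ [_ [kE _]]; exact: (kemb_comp HK kE (km i)).
split; first by move=> i x; rewrite tE ms.
move=> y; have [l [x Ex]] := mcov y.
have [i [li target_i]] := sqrt_remainder_unbounded (enum' y) l.
have [x' Ex'] := lift_along_chain ms (j := i.+1) x (leqW li).
have [|z Ez] := tcov i x'; first by rewrite Ex' Ex /target target_i enumK.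
by exists i.+1, z; rewrite Ez Ex' Ex.
Qed.
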